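(* Let $p$ be a well-typed Molholes program with exactly one input resource $r_{in}=\mathsf{Ref}\,I\,0$, one internal resource $r=\mathsf{Ref}\,S\,1$ with initial value $v:S$, and one output resource $r_{out}=\mathsf{Ref}\,O\,2$, whose body is \[\mathsf{program}\,p=\mathsf{Comp}\,(\mathsf{Get}\,r_{in})\,(\mathsf{Comp}\,(\mathsf{Get}\,r)\,(\mathsf{Comp}\,(\mathsf{Arr}\,f)\,(\mathsf{Comp}\,(\mathsf{Set}\,r)\,(\mathsf{Set}\,r_{out}))))\] for some $f:((\mathsf{Unit}\times I)\times S)\to((\mathsf{Unit}\times O)\times S)$. Let $f':I\times S\to O\times S$ be $f'(a,s)=(b,s')$ where $((tt,b),s')=f((tt,a),s)$, and let $\mathit{translate}\,p=\mathsf{Loop}\,v\,(\mathsf{Arr}\,f')$ (a YampaCore term of type $\mathsf{SF}\,I\,O$). Then for every stream $a_0,a_1,a_2,\dots$ of elements of $I$, the Molholes stream $\mathrm{run}\,p\,(\mathrm{init}\,p)\,([a_0],[a_1],\dots)$ is bisimilar (i.e. equal, as an infinite stream) to $([b_0],[b_1],\dots)$ where $b_0,b_1,\dots=\mathrm{run}_Y\,(\mathrm{step}_Y(\mathit{translate}\,p))\,(a_0,a_1,\dots)$.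
   Context: Host language: types are sets, functions total; products, $\mathsf{Unit}=\{tt\}$. Streams are infinite sequences. YampaCore: $\mathsf{sf}\,A\,B$ is the final-coalgebra type $\mathsf{sf}\,A\,B\cong A\to B\times\mathsf{sf}\,A\,B$. Terms: $\mathsf{Arr}\,g:\mathsf{SF}\,A\,B$ ($g:A\to B$), $\mathsf{Comp}$, $\mathsf{First}$, and $\mathsf{Loop}\,c\,t:\mathsf{SF}\,A\,B$ for $c:C$, $t:\mathsf{SF}(A\times C)(B\times C)$. Semantics: $\mathrm{step}_Y(\mathsf{Arr}\,g)=\mathit{arr}\,g$ with $\mathit{arr}\,g=\lambda x.(g\,x,\mathit{arr}\,g)$; $\mathrm{step}_Y(\mathsf{Loop}\,c\,t)=\mathit{loop}\,c\,(\mathrm{step}_Y t)$ with $\mathit{loop}\,c\,s=\lambda x.(y,\mathit{loop}\,c'\,s')$ where $((y,c'),s')=s(x,c)$ (Comp, First are as usual and not needed here). $\mathrm{run}_Y\,s\,(a:as)=b:\mathrm{run}_Y\,s'\,as$ where $(b,s')=s\,a$. Molholes: a resource of type $A$ is $\mathsf{Ref}\,A\,n$, $\mathrm{id}=n$. Terms $\mathsf{Arr}\,g$, $\mathsf{Comp}\,t_1\,t_2$, $\mathsf{First}\,t$, $\mathsf{Get}\,r:\mathsf{RSF}\,A\,(A\times B)$, $\mathsf{Set}\,r:\mathsf{RSF}\,(A\times B)\,A$ ($r$ of type $B$). A status is $\mathsf{Internal}$, $\mathsf{Input}\,b$ or $\mathsf{Output}\,b$; a cell is $\mathsf{Cell}(s,\tau)\,x$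 with $x$ a value of $\tau$ or $\mathsf{undef}$; a memory is a partial map $\mathbb N\rightharpoonup$ cells. For $r=\mathsf{Ref}\,A\,n$: $\mathrm{read}\,r\,\sigma=(x,\sigma)$ if $\sigma n=\mathsf{Cell}(\mathsf{Internal},A)x$; $=(x,\sigma[n\mapsto\mathsf{Cell}(\mathsf{Input}\,\mathrm{false},A)\,\mathsf{undef}])$ if $\sigma n=\mathsf{Cell}(\mathsf{Input}\,\mathrm{true},A)x$; else undefined. $\mathrm{write}\,r\,\sigma\,w=\sigma[n\mapsto\mathsf{Cell}(\mathsf{Internal},A)w]$ if $\sigma n=\mathsf{Cell}(\mathsf{Internal},A)x$; $=\sigma[n\mapsto\mathsf{Cell}(\mathsf{Output}\,\mathrm{false},A)w]$ if $\sigma n=\mathsf{Cell}(\mathsf{Output}\,\mathrm{true},A)\,\mathsf{undef}$; else undefined. Stepwise semantics $\mathrm{step}$ maps $\mathsf{RSF}\,A\,B$ to partial functions $A\to(\text{memory}\rightharpoonup B\times\text{memory})$: $\mathsf{Arr}\,g\mapsto\lambda x\sigma.(g x,\sigma)$; $\mathsf{Comp}\,t_1t_2\mapsto$ sequential composition threading memory; $\mathsf{First}\,t\mapsto\lambda(x,c)\sigma.((y,c),\sigma')$ with $(y,\sigma')=\mathrm{step}\,t\,x\,\sigma$; $\mathsf{Get}\,r\mapsto\lambda x\sigma.((x,y),\sigma')$ with $(y,\sigma')=\mathrm{read}\,r\,\sigma$; $\mathsf{Set}\,r\mapsto\lambda(x,y)\sigma.(x,\mathrm{write}\,r\,\sigma\,y)$.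 A program $p$ has a list $\mathsf{inputs}\,p$ of $k_{in}$ types, a list $\mathsf{internals}\,p$ of $k$ typed values, a list $\mathsf{outputs}\,p$ of $k_{out}$ types and a body $\mathsf{program}\,p:\mathsf{RSF}\,\mathsf{Unit}\,\mathsf{Unit}$; input resources have identifiers $0..k_{in}-1$, internal ones $k_{in}..k_{in}+k-1$, output ones $k_{in}+k..k_{in}+k+k_{out}-1$. $\mathrm{init}\,p$ maps each internal index $n$ to $\mathsf{Cell}(\mathsf{Internal},\tau)\,w$ where $w:\tau$ is the corresponding initial value, and is undefined elsewhere. $\mathrm{pull}\,p\,\sigma\,i$ (for a list $i$ of input values) maps input index $n$ to $\mathsf{Cell}(\mathsf{Input}\,\mathrm{true},\tau_n)\,i_n$, output index $n$ to $\mathsf{Cell}(\mathsf{Output}\,\mathrm{true},\tau)\,\mathsf{undef}$, and otherwise agrees with $\sigma$. $\mathrm{push}\,p\,\sigma$ is the list, in index order, of the values $w$ with $\sigma\,n=\mathsf{Cell}(\mathsf{Output}\,\mathrm{false},\tau)\,w$ for output indices $n$. $\mathrm{run}\,p\,\sigma\,(i:is)=(\mathrm{push}\,p\,\sigma'):\mathrm{run}\,p\,\sigma'\,is$ where $(tt,\sigma')=\mathrm{step}(\mathsf{program}\,p)\,tt\,(\mathrm{pull}\,p\,\sigma\,i)$. Well-typedness: an abstract memory $\Sigma$ maps indices to (status, type). $\mathrm{read}^\dagger\,(\mathsf{Ref}\,A\,n)\,\Sigma=\Sigma$ if $\Sigma n=(\mathsf{Internal},A)$, $=\Sigma[n\mapsto(\mathsf{Input}\,\mathrm{false},A)]$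 if $\Sigma n=(\mathsf{Input}\,\mathrm{true},A)$, undefined otherwise; $\mathrm{write}^\dagger$ is analogous with $\mathsf{Output}\,\mathrm{true}\mapsto\mathsf{Output}\,\mathrm{false}$. $\mathrm{step}^\dagger(\mathsf{Arr}\,g)\Sigma=\Sigma$, $\mathrm{step}^\dagger(\mathsf{First}\,t)=\mathrm{step}^\dagger t$, $\mathrm{step}^\dagger(\mathsf{Comp}\,t_1t_2)\Sigma=\mathrm{step}^\dagger t_2(\mathrm{step}^\dagger t_1\Sigma)$, $\mathrm{step}^\dagger(\mathsf{Get}\,r)=\mathrm{read}^\dagger r$, $\mathrm{step}^\dagger(\mathsf{Set}\,r)=\mathrm{write}^\dagger r$. $\mathrm{init}^\dagger p$ gives input indices $(\mathsf{Input}\,\mathrm{true},\tau)$, output indices $(\mathsf{Output}\,\mathrm{true},\tau)$, internal indices $(\mathsf{Internal},\tau)$. $p$ is well-typed if $\mathrm{step}^\dagger(\mathsf{program}\,p)(\mathrm{init}^\dagger p)$ is defined and in it every input index has status $\mathsf{Input}\,\mathrm{false}$ and every output index has status $\mathsf{Output}\,\mathrm{false}$. *)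

From Stdlib Require Import List Arith Bool Streams ClassicalEpsilon.
Import ListNotations.
Set Implicit Arguments.

Inductive Ref (A : Type) : Type := MkRef (n : nat).
Definition rid {A : Type} (r : Ref A) : nat := match r with MkRef _ n => n end.

Inductive RSF : Type -> Type -> Type :=
| RArr   : forall A B, (A -> B) -> RSF A B
| RComp  : forall A B C, RSF A B -> RSF B C -> RSF A C
| RFirst : forall A B C, RSF A B -> RSF (A * C) (B * C)
| RGet   : forall A B, Ref B -> RSF A (A * B)
| RSet   : forall A B, Ref B -> RSF (A * B) A.
Arguments RArr {A B} _.
Arguments RComp {A B C} _ _.
Arguments RFirst {A B C} _.
Arguments RGet {A B} _.
Arguments RSet {A B} _.

Inductive status : Type := Internal | Input (b : bool) | Output (b : bool).

(* Cell (s, tau) x, with x : option tau (None = undef). *)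
Record cell : Type := Cell { cstat : status; cty : Type; cval : option cty }.

Definition memory : Type := nat -> option cell.

Definition upd {X : Type} (s : nat -> option X) (n : nat) (c : X) : nat -> option X :=
  fun m => if Nat.eqb m n then Some c else s m.

Definition cast_opt {A B : Type} (e : A = B) (x : option A) : option B :=
  match e in _ = T return option T with eq_refl => x end.

Definition cell_as (A : Type) (c : cell) : option (option A) :=
  match excluded_middle_informative (cty c = A) with
  | left e => Some (cast_opt e (cval c))
  | right _ => None
  end.

Definition read {A : Type} (r : Ref A) (s : memory) : option (A * memory) :=
  let n := rid r in
  match s n with
  | None => None
  | Some c =>
    match cell_as A c with
    | None => None
    | Some ox =>
      match cstat c, ox with
      | Internal, Some x => Some (x, s)
      | Input true, Some x => Some (x, upd s n (@Cell (Input false) A None))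
      | _, _ => None
      end
    end
  end.

Definition write {A : Type} (r : Ref A) (s : memory) (w : A) : option memory :=
  let n := rid r in
  match s n with
  | None => None
  | Some c =>
    match cell_as A c with
    | None => None
    | Some ox =>
      match cstat c, ox with
      | Internal, _ => Some (upd s n (@Cell Internal A (Some w)))
      | Output true, None => Some (upd s n (@Cell (Output false) A (Some w)))
      | _, _ => None
      end
    end
  end.

Fixpoint step {A B : Type} (t : RSF A B) : A -> memory -> option (B * memory) :=
  match t in RSF A' B' return A' -> memory -> option (B' * memory) with
  | RArr g => fun x s => Some (g x, s)
  | RComp t1 t2 => fun x s =>
      match step t1 x s with
      | Some (y, s1) => step t2 y s1
      | None => None
      end
  | RFirst t => fun xc s =>
      match step t (fst xc) s with
      | Some (y, s') => Some ((y, snd xc), s')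
      | None => None
      end
  | RGet r => fun x s =>
      match read r s with
      | Some (y, s') => Some ((x, y), s')
      | None => None
      end
  | RSet r => fun xy s =>
      match write r s (snd xy) with
      | Some s' => Some (fst xy, s')
      | None => None
      end
  end.

Definition value : Type := { T : Type & T }.

Record program : Type := Program {
  inputs : list Type;
  internals : list value;
  outputs : list Type;
  prog_body : RSF unit unit
}.

Definition k_in (p : program) := length (inputs p).
Definition k_int (p : program) := length (internals p).
Definition k_out (p : program) := length (outputs p).

Definition init (p : program) : memory :=
  fun n =>
    if (k_in p <=? n) && (n <? k_in p + k_int p) then
      match nth_error (internals p) (n - k_in p) with
      | Some (existT _ T w) => Some (@Cell Internal T (Some w))
      | None => None
      end
    else None.

Definition coerce (T : Type) (v : value) : option T :=
  match excluded_middle_informative (projT1 v = T) with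
  | left e => cast_opt e (Some (projT2 v))
  | right _ => None
  end.

Definition pull (p : program) (s : memory) (i : list value) : memory :=
  fun n =>
    if n <? k_in p then
      match nth_error (inputs p) n with
      | Some T =>
          Some (@Cell (Input true) T
                  (match nth_error i n with Some v => coerce T v | None => None end))
      | None => None
      end
    else if (k_in p + k_int p <=? n) && (n <? k_in p + k_int p + k_out p) then
      match nth_error (outputs p) (n - (k_in p + k_int p)) with
      | Some T => Some (@Cell (Output true) T None)
      | None => None
      end
    else s n.

Definition push (p : program) (s : memory) : list value :=
  flat_map (fun n =>
      match s n with
      | Some (@Cell (Output false) T (Some w)) => [existT (fun X => X) T w]
      | _ => []
      end)
    (seq (k_in p + k_int p) (k_out p)).

(* Outputs stream; an undefined step is reported as None (the paper's run
   is only defined when every step is). *)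
CoFixpoint run (p : program) (s : memory) (is : Stream (list value))
  : Stream (option (list value)) :=
  match is with
  | Cons i is' =>
      match step (prog_body p) tt (pull p s i) with
      | Some (_, s') => Cons (Some (push p s')) (run p s' is')
      | None => Cons None (run p s is')
      end
  end.

Definition absmem : Type := nat -> option (status * Type).

Definition read_t {A : Type} (r : Ref A) (S : absmem) : option absmem :=
  let n := rid r in
  match S n with
  | Some (st, T) =>
    if excluded_middle_informative (T = A) then
      match st with
      | Internal => Some S
      | Input true => Some (upd S n (Input false, A))
      | _ => None
      end
    else None
  | None => None
  end.

Definition write_t {A : Type} (r : Ref A) (S : absmem) : option absmem :=
  let n := rid r in
  match S n with
  | Some (st, T) =>
    if excluded_middle_informative (T = A) then
      match st with
      | Internal => Some S
      | Output true => Some (upd S n (Output false, A))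
      | _ => None
      end
    else None
  | None => None
  end.

Fixpoint step_t {A B : Type} (t : RSF A B) (S : absmem) : option absmem :=
  match t with
  | RArr _ => Some S
  | RComp t1 t2 => match step_t t1 S with Some S1 => step_t t2 S1 | None => None end
  | RFirst t => step_t t S
  | RGet r => read_t r S
  | RSet r => write_t r S
  end.

Definition init_t (p : program) : absmem :=
  fun n =>
    if n <? k_in p then
      match nth_error (inputs p) n with Some T => Some (Input true, T) | None => None end
    else if n <? k_in p + k_int p then
      match nth_error (internals p) (n - k_in p) with
      | Some v => Some (Internal, projT1 v) | None => None end
    else if n <? k_in p + k_int p + k_out p then
      match nth_error (outputs p) (n - (k_in p + k_int p)) with
      | Some T => Some (Output true, T) | None => None end
    else None.

Definition well_typed (p : program) : Prop :=
  exists S, step_t (prog_body p) (init_t p) = Some S /\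
    (forall n, n < k_in p -> exists T, S n = Some (Input false, T)) /\
    (forall n, k_in p + k_int p <= n < k_in p + k_int p + k_out p ->
               exists T, S n = Some (Output false, T)).

CoInductive sf (A B : Type) : Type := MkSF { sf_step : A -> B * sf A B }.
Arguments MkSF {A B} _.
Arguments sf_step {A B} _ _.

Inductive SF : Type -> Type -> Type :=
| YArr   : forall A B, (A -> B) -> SF A B
| YComp  : forall A B C, SF A B -> SF B C -> SF A C
| YFirst : forall A B C, SF A B -> SF (A * C) (B * C)
| YLoop  : forall A B C, C -> SF (A * C) (B * C) -> SF A B.
Arguments YArr {A B} _.
Arguments YComp {A B C} _ _.
Arguments YFirst {A B C} _.
Arguments YLoop {A B C} _ _.

CoFixpoint arr {A B : Type} (g : A -> B) : sf A B := MkSF (fun x => (g x, arr g)).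

CoFixpoint comp {A B C : Type} (s1 : sf A B) (s2 : sf B C) : sf A C :=
  MkSF (fun x => let (y, s1') := sf_step s1 x in
                 let (z, s2') := sf_step s2 y in (z, comp s1' s2')).

CoFixpoint first {A B C : Type} (s : sf A B) : sf (A * C) (B * C) :=
  MkSF (fun xc => let (y, s') := sf_step s (fst xc) in ((y, snd xc), first s')).

CoFixpoint loop {A B C : Type} (c : C) (s : sf (A * C) (B * C)) : sf A B :=
  MkSF (fun x => let (yc, s') := sf_step s (x, c) in (fst yc, loop (snd yc) s')).

Fixpoint stepY {A B : Type} (t : SF A B) : sf A B :=
  match t in SF A' B' return sf A' B' with
  | YArr g => arr g
  | YComp t1 t2 => comp (stepY t1) (stepY t2)
  | YFirst t => first (stepY t)
  | YLoop c t => loop c (stepY t)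
  end.

CoFixpoint runY {A B : Type} (s : sf A B) (xs : Stream A) : Stream B :=
  match xs with
  | Cons a xs' => let (b, s') := sf_step s a in Cons b (runY s' xs')
  end.

Definition flatten_f {I S O : Type} (f : (unit * I) * S -> (unit * O) * S)
  : I * S -> O * S :=
  fun as_ => let '((_, b), s') := f ((tt, fst as_), snd as_) in (b, s').

Definition translate (I S O : Type) (v : S) (f : (unit * I) * S -> (unit * O) * S)
  : SF I O := YLoop v (YArr (flatten_f f)).

Definition body_shape (I S O : Type) (f : (unit * I) * S -> (unit * O) * S)
  : RSF unit unit :=
  RComp (RGet (MkRef I 0))
    (RComp (RGet (MkRef S 1))
      (RComp (RArr f)
        (RComp (RSet (MkRef S 1)) (RSet (MkRef O 2))))).

(* One run of the body reads the input cell and the state cell 1, applies [f],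
   writes the new state back to cell 1 and the result to the output cell.  This
   is exactly one step of [loop c (arr (flatten_f f))] when cell 1 holds the
   feedback value [c], so the two output streams agree by coinduction with the
   invariant "cell 1 holds the current loop state". *)
From Stdlib Require Import List Streams Eqdep ClassicalEpsilon.
Import ListNotations.

Lemma cell_as_Cell (A : Type) (st : status) (x : option A) :
  cell_as A (@Cell st A x) = Some x.
Proof.
  unfold cell_as; destruct (excluded_middle_informative _) as [e | ne].
  - now rewrite (UIP_refl _ _ e).
  - now contradiction ne.
Qed.

Lemma coerce_existT (T : Type) (w : T) : coerce T (existT (fun X => X) T w) = Some w.
Proof.
  unfold coerce; destruct (excluded_middle_informative _) as [e | ne].
  - now rewrite (UIP_refl _ _ e).
  - now contradiction ne.
Qed.

Lemma read_Input {A : Type} {n : nat} {m : memory} {x : A} :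
  m n = Some (@Cell (Input true) A (Some x)) ->
  read (MkRef A n) m = Some (x, upd m n (@Cell (Input false) A None)).
Proof. intro Hn; unfold read; cbn; now rewrite Hn, cell_as_Cell. Qed.

Lemma read_Internal {A : Type} {n : nat} {m : memory} {x : A} :
  m n = Some (@Cell Internal A (Some x)) -> read (MkRef A n) m = Some (x, m).
Proof. intro Hn; unfold read; cbn; now rewrite Hn, cell_as_Cell. Qed.

Lemma write_Internal {A : Type} {n : nat} {m : memory} {ox : option A} (w : A) :
  m n = Some (@Cell Internal A ox) ->
  write (MkRef A n) m w = Some (upd m n (@Cell Internal A (Some w))).
Proof. intro Hn; unfold write; cbn; now rewrite Hn, cell_as_Cell. Qed.

Lemma write_Output {A : Type} {n : nat} {m : memory} (w : A) :
  m n = Some (@Cell (Output true) A None) ->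
  write (MkRef A n) m w = Some (upd m n (@Cell (Output false) A (Some w))).
Proof. intro Hn; unfold write; cbn; now rewrite Hn, cell_as_Cell. Qed.

Lemma map_Cons (A B : Type) (g : A -> B) (a : A) (xs : Stream A) :
  Streams.map g (Cons a xs) = Cons (g a) (Streams.map g xs).
Proof. now rewrite (unfold_Stream (Streams.map g (Cons a xs))). Qed.

Lemma run_Cons_step {p : program} {m m' : memory} {u : unit} {i : list value}
  (is : Stream (list value)) :
  step (prog_body p) tt (pull p m i) = Some (u, m') ->
  run p m (Cons i is) = Cons (Some (push p m')) (run p m' is).
Proof.
  intro Hstep; rewrite (unfold_Stream (run p m (Cons i is))); cbn.
  now rewrite Hstep.
Qed.

Lemma runY_loop_arr_Cons (A B C : Type) (g : A * C -> B * C) (c : C) a xs :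
  runY (loop c (arr g)) (Cons a xs)
  = Cons (fst (g (a, c))) (runY (loop (snd (g (a, c))) (arr g)) xs).
Proof. now rewrite (unfold_Stream (runY (loop c (arr g)) (Cons a xs))). Qed.

Section Simulation.

Variables (p : program) (A B C : Type) (g : A * C -> B * C).
Variables (encode_in : A -> list value) (encode_out : B -> list value).
Variable R : memory -> C -> Prop.

Hypothesis step_simulates : forall m c a, R m c ->
  exists u m', step (prog_body p) tt (pull p m (encode_in a)) = Some (u, m')
    /\ push p m' = encode_out (fst (g (a, c)))
    /\ R m' (snd (g (a, c))).

Lemma run_simulates_loop_arr (m : memory) (c : C) (xs : Stream A) :
  R m c ->
  EqSt (run p m (Streams.map encode_in xs))
       (Streams.map (fun b => Some (encode_out b)) (runY (loop c (arr g)) xs)).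
Proof.
  revert m c xs; cofix CIH; intros m c [a xs] Hmc.
  destruct (step_simulates _ _ a Hmc) as (u & m' & Hstep & Hpush & Hm'c).
  rewrite map_Cons, (run_Cons_step _ Hstep), runY_loop_arr_Cons, map_Cons.
  constructor; cbn.
  - now rewrite Hpush.
  - exact (CIH m' _ xs Hm'c).
Qed.

End Simulation.

Section SingleResource.

Variables (I S O : Type) (v : S) (f : (unit * I) * S -> (unit * O) * S).

Definition single_resource_program : program :=
  Program [I] [existT (fun T : Type => T) S v] [O] (body_shape f).

Let p := single_resource_program.

Definition state_cell_holds (m : memory) (s : S) : Prop :=
  m 1 = Some (@Cell Internal S (Some s)).

Lemma step_body_shape (m : memory) (a : I) (s : S) :
  m 0 = Some (@Cell (Input true) I (Some a)) ->
  state_cell_holds m s ->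
  m 2 = Some (@Cell (Output true) O None) ->
  step (body_shape f) tt m
  = Some (tt, upd (upd (upd m 0 (@Cell (Input false) I None))
                       1 (@Cell Internal S (Some (snd (flatten_f f (a, s))))))
                  2 (@Cell (Output false) O (Some (fst (flatten_f f (a, s)))))).
Proof.
  intros Hin Hstate Hout; unfold flatten_f; cbn [fst snd].
  destruct (f (tt, a, s)) as [[[] b] s'] eqn:Ef.
  set (m1 := upd m 0 (@Cell (Input false) I None)).
  set (m2 := upd m1 1 (@Cell Internal S (Some s'))).
  assert (Hstate1 : m1 1 = Some (@Cell Internal S (Some s))) by exact Hstate.
  assert (Hout2 : m2 2 = Some (@Cell (Output true) O None)) by exact Hout.
  cbn [step body_shape]; rewrite (read_Input Hin); fold m1.
  rewrite (read_Internal Hstate1), Ef; cbn [fst snd].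
  rewrite (write_Internal s' Hstate1); fold m2; cbn [fst snd].
  now rewrite (write_Output b Hout2).
Qed.

Lemma step_single_resource (m : memory) (a : I) (s : S) :
  state_cell_holds m s ->
  exists u m',
    step (prog_body p) tt (pull p m [existT (fun T : Type => T) I a]) = Some (u, m')
    /\ push p m' = [existT (fun T : Type => T) O (fst (flatten_f f (a, s)))]
    /\ state_cell_holds m' (snd (flatten_f f (a, s))).
Proof.
  intro Hstate; eexists tt, _; split.
  - apply step_body_shape; cbn; [now rewrite coerce_existT | exact Hstate | reflexivity].
  - split; reflexivity.
Qed.

End SingleResource.

Theorem corollary2 (I S O : Type) (v : S) (f : (unit * I) * S -> (unit * O) * S)
  (p : program)
  (Hin : inputs p = [I])
  (Hint : internals p = [existT (fun T : Type => T) S v])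
  (Hout : outputs p = [O])
  (Hbody : prog_body p = body_shape f)
  (Hwt : well_typed p)
  (xs : Stream I) :
  EqSt (run p (init p) (Streams.map (fun a : I => [existT (fun T : Type => T) I a]) xs))
       (Streams.map (fun b : O => Some [existT (fun T : Type => T) O b])
                (runY (stepY (translate v f)) xs)).
Proof.
  destruct p as [ins ints outs body]; cbn in *; subst.
  apply run_simulates_loop_arr with (R := @state_cell_holds S).
  - intros m s a; apply step_single_resource.
  - reflexivity.
Qed.
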